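(* Let $\ell$ be a nondegenerate Hermitian form on a complex $n$-dimensional space $W$, $A$ an $\ell$-self-adjoint antilinear operator, and $\lambda>0$ such that $\lambda^2$ is an eigenvalue of $A^2$. Let $W_\lambda^{(m)}=\ker(A^2-\lambda^2I)^m$ and let $s_1$ be the least positive integer with $W_\lambda^{(s_1)}=W_\lambda^{(n)}$. Then there exists a vector $v\in W_\lambda^{(n)}$ (which can be taken with $(A-\lambda I)^{s_1}v=0$) such that $$V=\mathrm{span}_{\mathbb C}\{v,(A-\lambda I)v,\dots,(A-\lambda I)^{s_1-1}v\}$$ is an $s_1$-dimensional $A$-invariant subspace on which $\ell$ is nondegenerate.
   Context: An antilinear operator satisfies $A(zv+w)=\bar zAv+Aw$; $\ell$ is linear in the first argument and conjugate-linear in the second; $A$ is $\ell$-self-adjoint if $\ell(Av,w)=\ell(Aw,v)$ for all $v,w$. *)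

From HB Require Import structures.
From mathcomp Require Import all_boot all_order all_algebra.
Set Implicit Arguments. Unset Strict Implicit. Unset Printing Implicit Defensive.
Import Order.TTheory GRing.Theory Num.Theory.
Local Open Scope ring_scope.

Section Defs.
Variables (C : numClosedFieldType) (n : nat).
Local Notation W := 'rV[C]_n.

Definition antilinear (A : W -> W) : Prop :=
  forall (z : C) (v w : W), A (z *: v + w) = z^* *: A v + A w.

Definition hermitian_form (l : W -> W -> C) : Prop :=
  [/\ forall (z : C) (v w u : W), l (z *: v + w) u = z * l v u + l w u,
      forall (z : C) (u v w : W), l u (z *: v + w) = z^* * l u v + l u w
    & forall v w : W, l w v = (l v w)^*].

Definition nondeg_form (l : W -> W -> C) : Prop :=
  forall v : W, (forall w : W, l v w = 0) -> v = 0.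

Definition l_selfadjoint (l : W -> W -> C) (A : W -> W) : Prop :=
  forall v w : W, l (A v) w = l (A w) v.

Definition gen_eigen (A : W -> W) (lam : C) (m : nat) (x : W) : Prop :=
  iter m (fun y => A (A y) - lam ^+ 2 *: y) x = 0.

(* (A - lambda I) as a (real-linear) map on W *)
Definition AmL (A : W -> W) (lam : C) (y : W) : W := A y - lam *: y.

Definition krylov_span (A : W -> W) (lam : C) (v : W) (s : nat) : {vspace W} :=
  <<[seq iter k (AmL A lam) v | k <- iota 0 s]>>%VS.

Definition A_invariant (A : W -> W) (V : {vspace W}) : Prop :=
  forall x : W, x \in V -> A x \in V.

Definition nondegenerate_on (l : W -> W -> C) (V : {vspace W}) : Prop :=
  forall x : W, x \in V -> (forall y : W, y \in V -> l x y = 0) -> x = 0.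

End Defs.

(* Write N = A - lam and M = A + lam.  As lam is real, N and M commute, are
   R-linear, M - N = 2 lam, and N M = A^2 - lam^2 =: P is C-linear and
   l-symmetric.  By Fitting's lemma W = ker P^n (+) im P^n with l-orthogonal
   summands, so l is nondegenerate on W_lam^(n) = ker P^n.  Since
   A (i x) = - i A x, multiplication by i exchanges ker N^s and ker M^s, whence
   ker P^s = K + i K for K = ker N^s.  On K the form l is real and N is
   l-symmetric; if l (N^(s-1) v) v vanished on K, polarization and
   nondegeneracy would force N^(s-1) K = 0, hence P^(s-1) = 0 on
   ker P^s = ker P^n, against the minimality of s.  For v in K with
   l (N^(s-1) v) v <> 0 the Gram matrix l (N^j v) (N^k v) = l (N^(j+k) v) v of
   the Krylov vectors is anti-triangular with nonzero antidiagonal, so they are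
   independent and span a nondegenerate subspace, invariant under A = N + lam. *)

From HB Require Import structures.
From mathcomp Require Import all_boot all_order all_algebra.
From mathcomp Require Import zify ring.
From Stdlib Require Import Classical.
Import Order.TTheory GRing.Theory Num.Theory.
Local Open Scope ring_scope.
Set Implicit Arguments. Unset Strict Implicit. Unset Printing Implicit Defensive.

Section Fitting.
Variables (F : fieldType) (n : nat).
Implicit Type B : 'M[F]_n.

Lemma expmxS_sub B k : (B ^+ k.+1 <= B ^+ k)%MS.
Proof. by rewrite exprS -mulmxE submxMl. Qed.

Lemma expmx_sub_stable B k j :
  (B ^+ k <= B ^+ k.+1)%MS -> (B ^+ (k + j) <= B ^+ (k + j).+1)%MS.
Proof. by move=> /(submxMr (B ^+ j)); rewrite !mulmxE -!exprD addSn. Qed.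

Lemma expmx_sub_expS B : (B ^+ n <= B ^+ n.+1)%MS.
Proof.
apply/idPn => unstable.
have unstable_le k : (k <= n)%N -> ~~ (B ^+ k <= B ^+ k.+1)%MS.
  move=> le_kn; apply: contra unstable => /(expmx_sub_stable (n - k)).
  by rewrite subnKC.
have rank_bound k : (k <= n.+1)%N -> (\rank (B ^+ k) + k <= n)%N.
  elim: k => [|k IH] lt_kn; first by rewrite expr0 -idmxE mxrank1 addn0.
  have [le_rank eq_rank] := mxrank_leqif_sup (expmxS_sub B k).
  have lt_rank : (\rank (B ^+ k.+1) < \rank (B ^+ k))%N.
    by rewrite ltn_neqAle le_rank andbT eq_rank unstable_le.
  by rewrite addnS; apply: leq_trans (IH (ltnW lt_kn)); rewrite ltn_add2r.
by have := rank_bound n.+1 (leqnn _); rewrite addnS ltnNge leq_addl.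
Qed.

Lemma expmx_sub_expD B j : (B ^+ n <= B ^+ (n + j))%MS.
Proof.
elim: j => [|j IH]; first by rewrite addn0.
by apply: submx_trans IH _; rewrite addnS expmx_sub_stable ?expmx_sub_expS.
Qed.

Lemma expmx_fitting B (w : 'rV[F]_n) : exists z, (w - z *m B ^+ n) *m B ^+ n = 0.
Proof.
have /submxP[z def_z] : (w *m B ^+ n <= B ^+ (n + n))%MS.
  exact: submx_trans (submxMl _ _) (expmx_sub_expD B n).
by exists z; rewrite mulmxBl def_z exprD -mulmxE mulmxA subrr.
Qed.

Lemma iter_lin1_mx (f : {linear 'rV[F]_n -> 'rV[F]_n}) k x :
  x *m lin1_mx f ^+ k = iter k f x.
Proof.
elim: k x => [|k IH] x; first by rewrite expr0 mulmx1.
by rewrite exprSr -mulmxE mulmxA IH mul_rV_lin1.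
Qed.

Lemma linear_fitting (f : {linear 'rV[F]_n -> 'rV[F]_n}) w :
  exists z, iter n f (w - iter n f z) = 0.
Proof.
by have [z] := expmx_fitting (lin1_mx f) w; exists z; rewrite -!iter_lin1_mx.
Qed.

End Fitting.

Lemma iter_commute (T : Type) (f g : T -> T) :
  (forall x, f (g x) = g (f x)) -> forall k x, iter k f (g x) = g (iter k f x).
Proof. by move=> fg; elim=> //= k IH x; rewrite IH fg. Qed.

Definition krylov (U : Type) (f : U -> U) (v : U) (s : nat) : seq U :=
  [seq iter k f v | k <- iota 0 s].

Lemma size_krylov (U : Type) (f : U -> U) v s : size (krylov f v s) = s.
Proof. by rewrite size_map size_iota. Qed.

Lemma nth_krylov (U : zmodType) (f : U -> U) v s k :
  (k < s)%N -> (krylov f v s)`_k = iter k f v.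
Proof. by move=> lt_ks; rewrite (nth_map 0%N) ?size_iota // nth_iota. Qed.

Section IterAdditive.
Variables (U : zmodType) (f : {additive U -> U}).

Lemma iter_raddf0 k : iter k f 0 = 0.
Proof. by elim: k => // k IH; rewrite iterS IH raddf0. Qed.

Lemma iter_raddfD k x y : iter k f (x + y) = iter k f x + iter k f y.
Proof. by elim: k => // k IH; rewrite !iterS IH raddfD. Qed.

Lemma iter_raddfB k x y : iter k f (x - y) = iter k f x - iter k f y.
Proof. by elim: k => // k IH; rewrite !iterS IH raddfB. Qed.

End IterAdditive.

Lemma exists_index_witness (U : zmodType) (f : U -> U) (s n : nat) :
    f 0 = 0 -> (0 < s)%N -> (exists2 x, x != 0 & f x = 0) ->
    (forall x, iter s f x = 0 <-> iter n f x = 0) ->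
    (forall m, (0 < m)%N -> (m < s)%N ->
       ~ (forall x, iter m f x = 0 <-> iter n f x = 0)) ->
  exists2 w, iter s f w = 0 & iter s.-1 f w != 0.
Proof.
move=> f0 s_gt0 [x x_neq0 fx0] ker_s ker_min.
have [s_eq1 | s_neq1] := eqVneq s 1%N; first by exists x; rewrite s_eq1.
apply: NNPP => no_witness; apply: (ker_min s.-1); [lia | lia | move=> y].
rewrite -ker_s; split=> [y0 | ys0]; first by rewrite -(prednK s_gt0) iterS y0 f0.
by have [|y_nz] := eqVneq (iter s.-1 f y) 0; last by case: no_witness; exists y.
Qed.

Lemma hankel_antitriangular_eq0 (K : fieldType) m (c : 'I_m -> K) (h : nat -> K) :
    h m.-1 != 0 -> (forall t, (m <= t)%N -> h t = 0) ->
    (forall k : 'I_m, \sum_(j < m) c j * h (j + k)%N = 0) ->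
  forall j, c j = 0.
Proof.
move=> h_antidiag h_above c_orth.
suff c_small t (j : 'I_m) : (j < t)%N -> c j = 0 by move=> j; apply: (c_small j.+1).
elim: t j => // t IH j lt_jt; have lt_jm := ltn_ord j.
have lt_antidiag : (m.-1 - j < m)%N by lia.
have := c_orth (Ordinal lt_antidiag); rewrite (bigD1 j) //= big1.
  rewrite addr0 subnKC; last by lia.
  by move/eqP; rewrite mulf_eq0 (negbTE h_antidiag) orbF => /eqP.
move=> i ne_ij; have := ltn_ord i.
case: (ltngtP i j) => [lt_ij | lt_ji | /val_inj eq_ij] _; last by rewrite eq_ij eqxx in ne_ij.
- by rewrite IH ?mul0r //; lia.
- by rewrite h_above ?mulr0 //=; lia.
Qed.

Section CommutingSplit.
Variables (K : fieldType) (V : lmodType K) (N M : {additive V -> V}) (c : K).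
Hypotheses (c_neq0 : c != 0) (NM_comm : forall x, N (M x) = M (N x))
  (MN_diff : forall x, M x - N x = c *: x)
  (N_scaleVc : forall x, N (c^-1 *: x) = c^-1 *: N x)
  (M_scaleVc : forall x, M (c^-1 *: x) = c^-1 *: M x).

Lemma ker_comm_split j k y : iter j N (iter k M y) = 0 ->
  exists a b, [/\ y = a + b, iter j N a = 0 & iter k M b = 0].
Proof.
have [t le_jkt] : exists t, (j + k <= t)%N by exists (j + k)%N.
elim: t j k y le_jkt => [|t IH] [|j] [|k] y le_jkt ker_y;
  try by [exists 0, y; rewrite add0r | exists y, 0; rewrite addr0 | lia].
have [a1 [b1 [def_My a1_ker b1_ker]]] : exists a b,
    [/\ M y = a + b, iter j.+1 N a = 0 & iter k M b = 0].
  by apply: IH; [lia | rewrite -iterSr].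
have [a2 [b2 [def_Ny a2_ker b2_ker]]] : exists a b,
    [/\ N y = a + b, iter j N a = 0 & iter k.+1 M b = 0].
  apply: IH; first lia.
  by rewrite (iter_commute (fun x => esym (NM_comm x))) -iterSr.
exists (c^-1 *: (a1 - a2)), (c^-1 *: (b1 - b2)); split.
- rewrite -scalerDr addrACA -opprD -def_My -def_Ny MN_diff.
  by rewrite scalerA mulVf // scale1r.
- by rewrite (iter_commute N_scaleVc) iter_raddfB a1_ker iterS a2_ker raddf0 subrr scaler0.
- by rewrite (iter_commute M_scaleVc) iter_raddfB iterS b1_ker raddf0 b2_ker subrr scaler0.
Qed.

End CommutingSplit.

Section HermitianForm.
Variables (C : numClosedFieldType) (n : nat) (l : 'rV[C]_n -> 'rV[C]_n -> C).
Hypothesis hl : hermitian_form l.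

Lemma hermDl u : {morph l^~ u : x y / x + y}.
Proof. by case: hl => linl _ _ x y; have := linl 1 x y u; rewrite scale1r mul1r. Qed.

Lemma herm0l u : l 0 u = 0.
Proof. by apply: (addrI (l 0 u)); rewrite -hermDl !addr0. Qed.

Lemma hermZl a x u : l (a *: x) u = a * l x u.
Proof. by case: hl => linl _ _; rewrite -[a *: x]addr0 linl herm0l addr0. Qed.

Lemma hermBl x y u : l (x - y) u = l x u - l y u.
Proof. by rewrite hermDl -scaleN1r hermZl mulN1r. Qed.

Lemma herm_suml m (c : 'I_m -> C) (X : 'I_m -> 'rV[C]_n) u :
  l (\sum_i c i *: X i) u = \sum_i c i * l (X i) u.
Proof.
elim/big_rec2: _ => [|i y1 y2 _ <-]; first exact: herm0l.
by rewrite hermDl hermZl.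
Qed.

Lemma hermC x y : l y x = (l x y)^*.
Proof. by case: hl. Qed.

Lemma hermDr u : {morph l u : x y / x + y}.
Proof. by move=> x y; rewrite hermC hermDl rmorphD /= -!hermC. Qed.

Lemma herm0r u : l u 0 = 0.
Proof. by rewrite hermC herm0l conjC0. Qed.

Lemma hermZr a u x : l u (a *: x) = a^* * l u x.
Proof. by rewrite hermC hermZl rmorphM /= -hermC. Qed.

Lemma hermBr u x y : l u (x - y) = l u x - l u y.
Proof. by rewrite hermDr -scaleN1r hermZr conjCN1 mulN1r. Qed.

Hypothesis hnd : nondeg_form l.

(* Fitting: every w is u + P^n z with u in ker P^n, and P^n z is l-orthogonal
   to ker P^n. *)
Lemma nondeg_on_ker_expn (P : {linear 'rV[C]_n -> 'rV[C]_n}) :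
    (forall x y, l (P x) y = l x (P y)) ->
  forall u, iter n P u = 0 -> (forall y, iter n P y = 0 -> l u y = 0) -> u = 0.
Proof.
move=> P_sym u u_ker u_orth; apply: hnd => w.
have Pk_sym k x y : l (iter k P x) y = l x (iter k P y).
  by elim: k x y => // k IH x y; rewrite iterS P_sym IH -iterSr.
have [z z_ker] := linear_fitting P w.
by rewrite -(subrK (iter n P z) w) hermDr u_orth // -Pk_sym u_ker herm0l addr0.
Qed.

End HermitianForm.

(* [gen_eigen A lam m x] is convertible to [iter m (AsqmL A lam) x = 0]. *)
Definition AsqmL (C : numClosedFieldType) n (A : 'rV[C]_n -> 'rV[C]_n) (lam : C)
  (y : 'rV[C]_n) : 'rV[C]_n := A (A y) - lam ^+ 2 *: y.

Section Antilinear.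
Variables (C : numClosedFieldType) (n : nat) (A : 'rV[C]_n -> 'rV[C]_n).
Hypothesis hA : antilinear A.

Lemma antilinearD : {morph A : x y / x + y}.
Proof. by move=> x y; have := hA 1 x y; rewrite scale1r conjC1 scale1r. Qed.

Lemma antilinear0 : A 0 = 0.
Proof. by apply: (addrI (A 0)); rewrite -antilinearD !addr0. Qed.

HB.instance Definition _ :=
  GRing.isNmodMorphism.Build _ _ A (conj antilinear0 antilinearD).

Lemma antilinearB x y : A (x - y) = A x - A y.
Proof. exact: raddfB. Qed.

Lemma antilinearZ a x : A (a *: x) = a^* *: A x.
Proof. by rewrite -[a *: x]addr0 hA antilinear0 addr0. Qed.

Lemma AmL_is_nmod_morphism mu : nmod_morphism (AmL A mu).
Proof.
split=> [|x y]; first by rewrite /AmL antilinear0 scaler0 subr0.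
by rewrite /AmL antilinearD scalerDr opprD addrACA.
Qed.

HB.instance Definition _ mu :=
  GRing.isNmodMorphism.Build _ _ (AmL A mu) (AmL_is_nmod_morphism mu).

Lemma AsqmL_is_linear lam : linear (AsqmL A lam).
Proof.
move=> a x y; rewrite /AsqmL !antilinearD !antilinearZ conjCK scalerDr scalerBr.
by rewrite opprD addrACA !scalerA mulrC.
Qed.

HB.instance Definition _ lam :=
  GRing.isLinear.Build _ _ _ _ (AsqmL A lam) (AsqmL_is_linear lam).

Lemma iter_AmLD mu k : {morph iter k (AmL A mu) : x y / x + y}.
Proof. exact: iter_raddfD. Qed.

Lemma iter_AsqmLD lam k : {morph iter k (AsqmL A lam) : x y / x + y}.
Proof. exact: iter_raddfD. Qed.

Lemma iter_AsqmLZ lam k a x :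
  iter k (AsqmL A lam) (a *: x) = a *: iter k (AsqmL A lam) x.
Proof. by apply: iter_commute => y; rewrite linearZ. Qed.

Lemma AmL_realZ mu a x : a^* = a -> AmL A mu (a *: x) = a *: AmL A mu x.
Proof. by move=> a_real; rewrite /AmL antilinearZ a_real scalerBr !scalerA mulrC. Qed.

Lemma iter_AmL_imagZ mu a k x : a^* = - a ->
  iter k (AmL A mu) (a *: x) = ((-1) ^+ k * a) *: iter k (AmL A (- mu)) x.
Proof.
move=> a_imag; elim: k => [|k IH]; first by rewrite mul1r.
rewrite !iterS IH; set z := iter k _ x.
rewrite /AmL antilinearZ rmorphM rmorphXn /= conjCN1 a_imag scalerBr !scalerA.
by congr (_ *: _ - _ *: _); rewrite exprS; ring.
Qed.

Section KrylovSpan.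
Variables (lam : C) (v : 'rV[C]_n) (s : nat).
Local Notation N := (AmL A lam).

Lemma krylov_span_mem k : (k < s)%N -> iter k N v \in krylov_span A lam v s.
Proof. by move=> lt_ks; apply/memv_span/map_f; rewrite mem_iota. Qed.

Hypothesis v_nil : iter s N v = 0.

Lemma krylov_span_AmL_mem k : (k < s)%N -> N (iter k N v) \in krylov_span A lam v s.
Proof.
rewrite -iterS => lt_ks; have [lt_kSs | le_sk] := ltnP k.+1 s.
  exact: krylov_span_mem.
have -> : k.+1 = s by lia.
by rewrite v_nil rpred0.
Qed.

Lemma krylov_span_A_invariant : A_invariant A (krylov_span A lam v s).
Proof.
move=> x x_mem; rewrite (coord_span (x_mem : x \in <<in_tuple (krylov N v s)>>%VS)).
elim/big_rec: _ => [|i y _ y_mem]; first by rewrite antilinear0 rpred0.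
have lt_is : (i < s)%N := leq_trans (ltn_ord i) (eq_leq (size_krylov N v s)).
rewrite antilinearD antilinearZ rpredD ?rpredZ //= nth_krylov //.
rewrite -[A _](subrK (lam *: iter i N v)) rpredD ?rpredZ ?krylov_span_mem //.
exact: krylov_span_AmL_mem.
Qed.

End KrylovSpan.

Variable lam : C.
Hypothesis lam_real : lam^* = lam.

Lemma AmL_AmLN y : AmL A lam (AmL A (- lam) y) = AsqmL A lam y.
Proof.
rewrite /AmL /AsqmL antilinearB antilinearZ rmorphN /= lam_real.
by rewrite !(mulrN, scaleNr, scalerN, scalerBr, opprK, opprD, scalerA) -expr2 addrA addrK.
Qed.

Lemma AmLN_AmL y : AmL A (- lam) (AmL A lam y) = AsqmL A lam y.
Proof.
rewrite /AmL /AsqmL antilinearB antilinearZ lam_real.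
by rewrite !(mulrN, scaleNr, scalerN, scalerBr, opprK, opprD, scalerA) -expr2 addrA subrK.
Qed.

Lemma AmL_comm y : AmL A (- lam) (AmL A lam y) = AmL A lam (AmL A (- lam) y).
Proof. by rewrite AmL_AmLN AmLN_AmL. Qed.

Lemma iter_AsqmL k x :
  iter k (AsqmL A lam) x = iter k (AmL A (- lam)) (iter k (AmL A lam) x).
Proof.
elim: k x => // k IH x; rewrite iterS IH -AmLN_AmL.
by rewrite -(iter_commute AmL_comm).
Qed.

Section SelfAdjoint.
Variable l : 'rV[C]_n -> 'rV[C]_n -> C.
Hypotheses (hl : hermitian_form l) (hsa : l_selfadjoint l A) (lam_neq0 : lam != 0).
Local Notation N := (AmL A lam).
Local Notation M := (AmL A (- lam)).
Local Notation P := (AsqmL A lam).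

Lemma AsqmL_sym x y : l (P x) y = l x (P y).
Proof.
rewrite /AsqmL hermBl // hermBr // hermZl // hermZr // rmorphXn /= lam_real.
by rewrite (hsa (A x)) [in RHS]hermC // (hsa (A y)) -hermC.
Qed.

Lemma AmL_herm_skew x y : l (N x) y - l (N y) x = - lam * (l x y - l y x).
Proof. by rewrite /AmL !hermBl // !hermZl // (hsa x y); ring. Qed.

Lemma AmL_herm_skew_sum x y :
  (l (N x) y - l y (N x)) + (l x (N y) - l (N y) x) = - (lam *+ 2) * (l x y - l y x).
Proof.
rewrite /AmL !hermBl // !hermBr // !hermZl // !hermZr // lam_real (hsa x y).
have -> : l y (A x) = l x (A y) by rewrite hermC // (hsa x) -hermC.
by ring.
Qed.

Lemma herm_real_on_nil a b x y :
  iter a N x = 0 -> iter b N y = 0 -> l x y = l y x.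
Proof.
have lam2_neq0 : lam *+ 2 != 0 by rewrite mulrn_eq0.
elim: a x y b => [|a IHa] x y b Nx Ny.
  by move: Nx => /= ->; rewrite herm0l // herm0r.
elim: b y Ny => [|b IHb] y Ny.
  by move: Ny => /= ->; rewrite herm0l // herm0r.
have real_Nx_y : l (N x) y = l y (N x) by apply: (IHa _ _ b.+1); rewrite -?iterSr.
have real_x_Ny : l x (N y) = l (N y) x by apply: IHb; rewrite -iterSr.
have := AmL_herm_skew_sum x y; rewrite real_Nx_y real_x_Ny !subrr addr0 => /esym/eqP.
by rewrite mulf_eq0 oppr_eq0 (negbTE lam2_neq0) subr_eq0 => /eqP.
Qed.

(* ker P^s = ker M^s + ker N^s, and i maps ker N^s onto ker M^s. *)
Lemma ker_AsqmL_split s w : iter s P w = 0 ->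
  exists a b, [/\ w = a + 'i *: b, iter s N a = 0 & iter s N b = 0].
Proof.
pose c := - (lam *+ 2).
have c_neq0 : c != 0 by rewrite oppr_eq0 mulrn_eq0.
have Vc_real : c^-1^* = c^-1 by rewrite fmorphV rmorphN rmorphMn /= lam_real.
have NM_diff x : N x - M x = c *: x.
  by rewrite /AmL opprB addrC addrA subrK /c !scaleNr -scalerMnl mulr2n opprD.
rewrite iter_AsqmL => Pw.
have [a [b [-> Ma Nb]]] :
    exists a b, [/\ w = a + b, iter s M a = 0 & iter s N b = 0] :=
  ker_comm_split (N := M) (M := N) c_neq0 AmL_comm NM_diff
  (fun x => AmL_realZ _ x Vc_real) (fun x => AmL_realZ _ x Vc_real) Pw.
exists b, (- 'i *: a); split=> //.
  by rewrite scalerA mulrN -expr2 sqrCi opprK scale1r addrC.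
by rewrite iter_AmL_imagZ ?Ma ?scaler0 // rmorphN /= conjCi.
Qed.

Section NilpotentPart.
Variable s : nat.
Local Notation nil_s x := (iter s N x = 0).

Lemma nil_AmL x : nil_s x -> nil_s (N x).
Proof. by move=> Nx; rewrite -iterSr iterS Nx raddf0. Qed.

Lemma nil_iter_AmL k x : nil_s x -> nil_s (iter k N x).
Proof. by move=> Nx; elim: k => // k; rewrite iterS; apply: nil_AmL. Qed.

Lemma AmL_sym_on_nil x y : nil_s x -> nil_s y -> l (N x) y = l x (N y).
Proof.
move=> Nx Ny; have := AmL_herm_skew x y.
rewrite (herm_real_on_nil Nx Ny) subrr mulr0 => /eqP; rewrite subr_eq0 => /eqP ->.
exact: herm_real_on_nil (nil_AmL Ny) Nx.
Qed.

Lemma iter_AmL_sym_on_nil k x y :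
  nil_s x -> nil_s y -> l (iter k N x) y = l x (iter k N y).
Proof.
elim: k y => // k IH y Nx Ny.
by rewrite iterS AmL_sym_on_nil ?nil_iter_AmL // IH ?nil_AmL // -iterSr.
Qed.

Lemma nil_pairing_polar :
    (forall v, nil_s v -> l (iter s.-1 N v) v = 0) ->
  forall x y, nil_s x -> nil_s y -> l (iter s.-1 N x) y = 0.
Proof.
move=> vanish x y Nx Ny.
have Nxy : nil_s (x + y) by rewrite iter_AmLD Nx Ny addr0.
have := vanish _ Nxy; rewrite iter_AmLD hermDl // !hermDr // !vanish // add0r addr0.
rewrite (iter_AmL_sym_on_nil _ Ny Nx) (herm_real_on_nil Ny (nil_iter_AmL _ Nx)).
by move/eqP; rewrite -mulr2n mulrn_eq0 => /eqP.
Qed.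

Lemma nil_AsqmL x : nil_s x -> iter s P x = 0.
Proof. by move=> Nx; rewrite iter_AsqmL Nx iter_raddf0. Qed.

Hypotheses (hnd : nondeg_form l) (ker_s : forall x, iter s P x = 0 <-> iter n P x = 0).

Lemma AsqmL_index_drop :
    (forall v, nil_s v -> l (iter s.-1 N v) v = 0) ->
  forall w, iter s P w = 0 -> iter s.-1 P w = 0.
Proof.
move=> vanish.
have radical x : nil_s x -> iter s.-1 N x = 0.
  move=> Nx; apply: (nondeg_on_ker_expn hl hnd AsqmL_sym).
    by apply/ker_s/nil_AsqmL/nil_iter_AmL.
  move=> y /ker_s /ker_AsqmL_split [a [b [-> Na Nb]]].
  by rewrite hermDr // hermZr // !nil_pairing_polar // mulr0 addr0.
move=> w /ker_AsqmL_split [a [b [-> Na Nb]]].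
rewrite iter_AsqmLD iter_AsqmLZ !iter_AsqmL !radical //.
by rewrite !iter_raddf0 scaler0 addr0.
Qed.

Lemma exists_krylov_generator :
    (exists2 w, iter s P w = 0 & iter s.-1 P w != 0) ->
  exists v, nil_s v /\ l (iter s.-1 N v) v != 0.
Proof.
move=> [w Pw /eqP Pw_nz]; apply: NNPP => no_generator; apply: Pw_nz.
apply: AsqmL_index_drop Pw => v Nv.
by have [//|pair_nz] := eqVneq (l (iter s.-1 N v) v) 0; case: no_generator; exists v.
Qed.

End NilpotentPart.

Section KrylovGram.
Variables (v : 'rV[C]_n) (s : nat).
Hypotheses (v_nil : iter s N v = 0) (v_pair : l (iter s.-1 N v) v != 0).

Lemma krylov_gram j k : l (iter j N v) (iter k N v) = l (iter (j + k) N v) v.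
Proof. by rewrite -(iter_AmL_sym_on_nil k (nil_iter_AmL j v_nil) v_nil) -iterD addnC. Qed.

Lemma krylov_coord_eq0 (c : 'I_(size (krylov N v s)) -> C) :
    (forall k, (k < s)%N -> l (\sum_i c i *: (krylov N v s)`_i) (iter k N v) = 0) ->
  forall i, c i = 0.
Proof.
move=> c_orth; apply: (@hankel_antitriangular_eq0 _ _ c (fun t => l (iter t N v) v)).
- by rewrite size_krylov.
- move=> t; rewrite size_krylov => le_st.
  by rewrite -(subnK le_st) iterD v_nil iter_raddf0 herm0l.
- move=> k; have lt_ks : (k < s)%N := leq_trans (ltn_ord k) (eq_leq (size_krylov _ _ _)).
  rewrite -[RHS](c_orth k lt_ks) herm_suml //; apply: eq_bigr => j _.
  have lt_js : (j < s)%N := leq_trans (ltn_ord j) (eq_leq (size_krylov _ _ _)).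
  by rewrite nth_krylov // krylov_gram.
Qed.

Lemma krylov_span_dim : \dim (krylov_span A lam v s) = s.
Proof.
have free_krylov : free (in_tuple (krylov N v s)).
  by apply/freeP => c c_sum; apply: krylov_coord_eq0 => k _; rewrite c_sum herm0l.
exact: etrans (eqP free_krylov) (size_krylov _ _ _).
Qed.

Lemma krylov_span_nondeg : nondegenerate_on l (krylov_span A lam v s).
Proof.
move=> x x_mem x_orth.
have def_x := coord_span (x_mem : x \in <<in_tuple (krylov N v s)>>%VS).
have coord_eq0 : forall i, coord (in_tuple (krylov N v s)) i x = 0.
  by apply: krylov_coord_eq0 => k lt_ks; rewrite -def_x x_orth ?krylov_span_mem.
by rewrite def_x big1 // => i _; rewrite coord_eq0 scale0r.
Qed.

End KrylovGram.

End SelfAdjoint.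
End Antilinear.

Unset Implicit Arguments. Set Strict Implicit. Set Printing Implicit Defensive.

Theorem mainTheorem9 (C : numClosedFieldType) (n : nat)
    (l : 'rV[C]_n -> 'rV[C]_n -> C) (A : 'rV[C]_n -> 'rV[C]_n) (lam : C)
    (hl : hermitian_form l) (hnd : nondeg_form l)
    (hA : antilinear A) (hsa : l_selfadjoint l A)
    (hlam : 0 < lam)
    (heig : exists x : 'rV[C]_n, x != 0 /\ A (A x) = lam ^+ 2 *: x)
    (s1 : nat) (hs1pos : (0 < s1)%N)
    (hs1 : forall x, gen_eigen A lam s1 x <-> gen_eigen A lam n x)
    (hs1min : forall m : nat, (0 < m)%N -> (m < s1)%N ->
       ~ (forall x, gen_eigen A lam m x <-> gen_eigen A lam n x)) :
  exists v : 'rV[C]_n,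
    [/\ gen_eigen A lam n v,
        iter s1 (AmL A lam) v = 0,
        \dim (krylov_span A lam v s1) = s1,
        A_invariant A (krylov_span A lam v s1)
      & nondegenerate_on l (krylov_span A lam v s1)].
Proof.
have lam_real : lam^* = lam by apply/geC0_conj/ltW.
have lam_neq0 : lam != 0 := lt0r_neq0 hlam.
have P0 : AsqmL A lam 0 = 0 by rewrite /AsqmL !(antilinear0 hA) scaler0 subr0.
have P_ker : exists2 x, x != 0 & AsqmL A lam x = 0.
  by case: heig => x [x_neq0 Ax]; exists x; rewrite // /AsqmL Ax subrr.
have [w Pw Pw_nz] := exists_index_witness P0 hs1pos P_ker hs1 hs1min.
have [v [v_nil v_pair]] := exists_krylov_generator hA lam_real hl hsa lam_neq0 hnd hs1
  (ex_intro2 _ _ w Pw Pw_nz).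
exists v; split=> //.
- exact/hs1/(nil_AsqmL hA lam_real).
- exact: (krylov_span_dim hA lam_real hl hsa lam_neq0 v_nil v_pair).
- exact: (krylov_span_A_invariant hA v_nil).
- exact: (krylov_span_nondeg hA lam_real hl hsa lam_neq0 v_nil v_pair).
Qed.
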